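(* Let $t\ge 2$ be an integer and let $G$ be a graph with $n$ vertices. Then \[ \mu_{t}(G)\leq \frac{t}{n}\binom{n}{t}^{\frac{1}{t}}\left(c_{t}(G)\right)^{\frac{t-1}{t}}, \] where $c_t(G)$ is the number of $t$-cliques of $G$ and $\mu_t(G)$ is the $t$-clique spectral radius of $G$. Furthermore, equality holds if $G$ is a complete graph or a $K_t$-free graph.
   Context: All graphs are simple and undirected. A $t$-clique of a graph $G$ is a set of $t$ vertices inducing a complete subgraph; $C_t(G)$ denotes the set of $t$-cliques and $c_t(G)=|C_t(G)|$. For a graph $G$ with vertex set $\{1,\dots,n\}$, the $t$-clique tensor $\mathcal{A}(G)=(a_{i_1\cdots i_t})$ is the order $t$, dimension $n$ tensor with $a_{i_1 i_2\cdots i_t}=\frac{1}{(t-1)!}$ if $\{i_1,\dots,i_t\}\in C_t(G)$ (in particular the $i_j$ are distinct) and $a_{i_1\cdots i_t}=0$ otherwise. For an order $m$ dimension $n$ tensor $\mathcal{A}$ and $x\in\mathbb{C}^n$, $\mathcal{A}x^{m-1}$ is the vector whose $i$-th component is $\sum_{i_2,\dots,i_m=1}^n a_{i i_2\cdots i_m}x_{i_2}\cdots x_{i_m}$; $\lambda\in\mathbb{C}$ is an eigenvalue of $\mathcal{A}$ if there is a nonzero $x\in\mathbb{C}^n$ with $\mathcal{A}x^{m-1}=\lambda x^{[m-1]}$, where $x^{[m-1]}=(x_1^{m-1},\dots,x_n^{m-1})^T$. The $t$-clique spectral radius $\mu_t(G)$ is the largest modulus of an eigenvalue of the $t$-clique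 tensor of $G$. *)

From HB Require Import structures.
From mathcomp Require Import all_boot all_order all_algebra.
From mathcomp Require Import all_classical all_reals all_analysis.
From mathcomp Require Import complex.
Set Implicit Arguments. Unset Strict Implicit. Unset Printing Implicit Defensive.
Import Order.TTheory GRing.Theory Num.Theory.
Local Open Scope ring_scope.

(* A simple graph on vertex set 'I_n is given by an adjacency relation e,
   assumed symmetric and irreflexive (hypotheses of the theorem). *)

Definition is_clique (n : nat) (e : rel 'I_n) (A : {set 'I_n}) : bool :=
  [forall x in A, forall y in A, (x != y) ==> e x y].

Definition cliques (n : nat) (e : rel 'I_n) (t : nat) : {set {set 'I_n}} :=
  [set A : {set 'I_n} | is_clique e A && (#|A| == t)].

Definition clique_number (n : nat) (e : rel 'I_n) (t : nat) : nat :=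
  #|cliques e t|.

Definition cmod (R : rcfType) (z : R[i]) : R :=
  let: Complex a b := z in Num.sqrt (a ^+ 2 + b ^+ 2).

(* A tensor of order m, dimension n, with complex entries, indexed by
   sequences (i_1, ..., i_m) of vertices (only sequences of size m matter). *)
Definition tensor (R : rcfType) (n : nat) := seq 'I_n -> R[i].

Definition tensor_apply (R : rcfType) (m n : nat) (A : tensor R n)
    (x : 'I_n -> R[i]) (i : 'I_n) : R[i] :=
  \sum_(g : (m.-1).-tuple 'I_n) A (i :: tval g) * \prod_(j <- tval g) x j.

Definition is_eigenvalue (R : rcfType) (m n : nat) (A : tensor R n)
    (lam : R[i]) : Prop :=
  exists x : 'I_n -> R[i], (exists i, x i != 0) /\
    forall i, tensor_apply m A x i = lam * x i ^+ (m.-1).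

Definition spectral_radius (R : realType) (m n : nat) (A : tensor R n) : R :=
  sup [set cmod lam | lam in [set lam | is_eigenvalue m A lam]]%classic.

Definition clique_tensor (R : rcfType) (n : nat) (e : rel 'I_n) (t : nat)
    : tensor R n :=
  fun s => if (size s == t) && ([set x in s] \in cliques e t)
           then ((t.-1)`!%:R)^-1 else 0.

Definition clique_spectral_radius (R : realType) (n : nat) (e : rel 'I_n)
    (t : nat) : R :=
  spectral_radius t (clique_tensor R e t).

(** Let [x] be an eigenvector for [lam] and [y = |x|]. Taking moduli in the
    eigen-equation, multiplying by [y_i] and summing over [i] gives
    [|lam| * sum_i y_i^t <= W / (t-1)!], where [W] is the sum of
    [y_(s_1) * ... * y_(s_t)] over the [t! * c_t] vertex tuples [s] spanning a
    [t]-clique. By the power mean inequality [W^t] is at most [(t! * c_t)^(t-1)]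
    times the sum of [(y_(s_1) * ... * y_(s_t))^t] over these tuples, hence at
    most [(t! * c_t)^(t-1) * t! * e_t(y_1^t, ..., y_n^t)]. Maclaurin's inequality
    [e_t(z) <= C(n,t) * (sum_i z_i / n)^t], proved by repeatedly moving two
    coordinates to the mean, turns this into a multiple of [(sum_i y_i^t)^t],
    which cancels against the left-hand side.
    For a complete graph the all-ones vector is an eigenvector for
    [C(n-1, t-1)], which attains the bound; for a [K_t]-free graph the tensor
    vanishes and so does the bound. *)

From HB Require Import structures.
From mathcomp Require Import all_boot all_order all_algebra.
From mathcomp Require Import all_classical all_reals all_analysis.
From mathcomp Require Import perm complex ring lra.
Import Order.TTheory GRing.Theory Num.Theory.
Local Open Scope ring_scope.

Section RealSums.
Context {R : realDomainType} {I : finType}.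

Lemma sum_eq0_exists_lt0 (u : I -> R) :
  \sum_i u i = 0 -> (exists i, u i != 0) -> exists i, u i < 0.
Proof.
move=> u_sum0 [i ui_neq0]; case: (pickP (fun j => u j < 0)) => [j uj_lt0|u_nlt0].
  by exists j.
have u_ge0 j : 0 <= u j by rewrite leNgt u_nlt0.
by rewrite (psumr_eq0P (fun j _ => u_ge0 j) u_sum0 (i := i) isT) eqxx in ui_neq0.
Qed.

Variables (P : pred I) (a : I -> R).
Hypothesis a_ge0 : forall i, P i -> 0 <= a i.

Lemma chebyshev_sum_exprS j :
  (\sum_(i | P i) a i) * \sum_(i | P i) a i ^+ j.+1
    <= #|P|%:R * \sum_(i | P i) a i ^+ j.+2.
Proof.
pose d i k := a k ^+ j.+2 - a i * a k ^+ j.+1.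
have gap : #|P|%:R * \sum_(i | P i) a i ^+ j.+2
    - (\sum_(i | P i) a i) * \sum_(i | P i) a i ^+ j.+1
    = \sum_(i | P i) \sum_(k | P k) d i k.
  rewrite mulr_natl -sumr_const mulr_suml -sumrB; apply: eq_bigr => i _.
  by rewrite mulr_sumr sumrB.
have same_sign (x y : R) : 0 <= x -> 0 <= y -> 0 <= (x - y) * (x ^+ j.+1 - y ^+ j.+1).
  move=> x_ge0 y_ge0; have [xy|/ltW yx] := leP x y.
    by apply: mulr_le0; rewrite subr_le0 //; apply: lerXn2r; rewrite ?nnegrE.
  by apply: mulr_ge0; rewrite subr_ge0 //; apply: lerXn2r; rewrite ?nnegrE.
rewrite -subr_ge0 -(pmulrn_lge0 _ (isT : (0 < 2)%N)) mulr2n {1}gap.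
rewrite gap [X in _ + X]exchange_big -big_split /= sumr_ge0 // => i Pi.
rewrite -big_split /= sumr_ge0 // => k Pk.
have -> : d i k + d k i = (a k - a i) * (a k ^+ j.+1 - a i ^+ j.+1).
  by rewrite /d !exprS; ring.
by apply: same_sign; apply: a_ge0.
Qed.

Lemma power_mean_exprS j :
  (\sum_(i | P i) a i) ^+ j.+1 <= #|P|%:R ^+ j * \sum_(i | P i) a i ^+ j.+1.
Proof.
elim: j => [|j IH]; first by rewrite mul1r.
have sum_ge0 : 0 <= \sum_(i | P i) a i by apply: sumr_ge0.
rewrite exprS (le_trans (ler_wpM2l sum_ge0 IH)) // mulrCA [#|P|%:R ^+ j.+1]exprSr -mulrA.
by apply: ler_wpM2l; [apply: exprn_ge0 | apply: chebyshev_sum_exprS].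
Qed.

End RealSums.

Section Maclaurin.
Context {R : realFieldType} {I : finType}.
Variable t : nat.
Implicit Types (z w : I -> R) (s : seq I).

(* [t`!] times the [t]-th elementary symmetric function of [z] *)
Definition sum_prod_uniq z := \sum_(s : t.-tuple I | uniq s) \prod_(j <- s) z j.

Lemma sum_prod_uniq_const (c : R) :
  sum_prod_uniq (fun=> c) = (#|I| ^_ t)%:R * c ^+ t.
Proof.
rewrite /sum_prod_uniq (eq_bigr (fun=> c ^+ t)) => [|s _]; last first.
  by rewrite big_const_seq count_predT size_tuple iter_mulr_1.
rewrite sumr_const mulr_natl -(card_uniq_tuples t predT).
by congr (_ *+ _); apply: eq_card => s; rewrite !inE all_predT.
Qed.

Lemma sum_prod_uniq_perm (p : {perm I}) z :
  sum_prod_uniq (z \o p) = sum_prod_uniq z.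
Proof.
have map_p_inj : injective (fun s : t.-tuple I => map_tuple p s).
  by move=> s1 s2 /(congr1 val) /(inj_map (@perm_inj _ p)) /val_inj.
rewrite [RHS](reindex_inj map_p_inj); apply: eq_big => s /=.
  by rewrite map_inj_uniq //; apply: perm_inj.
by rewrite big_map.
Qed.

Lemma prod_seq_split2 s z a b : a != b ->
  \prod_(j <- s) z j = \prod_(j <- s | (j != a) && (j != b)) z j
                       * z a ^+ count_mem a s * z b ^+ count_mem b s.
Proof.
move=> ab; elim: s => [|x s IH]; first by rewrite !big_nil !mulr1.
rewrite !big_cons IH /=; case: (eqVneq x a) => [->|xa].
  by rewrite (negbTE ab) /= exprS; ring.
by case: (eqVneq x b) => [->|xb] /=; rewrite ?exprS; ring.
Qed.

(* Pair each tuple with its image under the transposition of [a] and [b]: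
   the two terms together depend on [z a] and [z b] only through
   [z a + z b] and [z a * z b], increasingly in the latter. *)
Lemma sum_prod_uniq_le_smooth z z' a b : a != b ->
  (forall i, 0 <= z i) -> (forall i, 0 <= z' i) ->
  (forall i, i != a -> i != b -> z' i = z i) ->
  z a + z b = z' a + z' b -> z a * z b <= z' a * z' b ->
  sum_prod_uniq z <= sum_prod_uniq z'.
Proof.
move=> ab z_ge0 z'_ge0 z'E sumE prod_le; pose tau := tperm a b.
have twice w : sum_prod_uniq w *+ 2 = \sum_(s : t.-tuple I | uniq s)
    (\prod_(j <- s) w j + \prod_(j <- s) (w \o tau) j).
  by rewrite big_split mulr2n -{2}(sum_prod_uniq_perm tau w).
rewrite -(ler_pMn2r (isT : (0 < 2)%N)) !twice; apply: ler_sum => s s_uniq.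
have tauE j : j != a -> j != b -> tau j = j.
  by move=> ja jb; rewrite tpermD // eq_sym.
have restE w : (forall j, j != a -> j != b -> w j = z j) ->
    \prod_(j <- s | (j != a) && (j != b)) w j
    = \prod_(j <- s | (j != a) && (j != b)) z j.
  by move=> wE; apply: eq_bigr => j /andP[ja jb]; apply: wE.
have z_tauE j : j != a -> j != b -> (z \o tau) j = z j.
  by move=> ja jb; rewrite /= tauE.
have z'_tauE j : j != a -> j != b -> (z' \o tau) j = z j.
  by move=> ja jb; rewrite /= tauE ?z'E.
rewrite !(prod_seq_split2 s _ a b ab) (restE _ z_tauE) (restE _ z'E) (restE _ z'_tauE).
rewrite /= tpermL tpermR !count_uniq_mem //.
have rest_ge0 : 0 <= \prod_(j <- s | (j != a) && (j != b)) z j.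
  by apply: prodr_ge0 => j _.
have := z_ge0 a; have := z_ge0 b; have := z'_ge0 a; have := z'_ge0 b.
by case: (a \in s); case: (b \in s); rewrite /= ?expr0 ?expr1 ?mulr1; nra.
Qed.

Lemma sum_prod_uniq_smooth_step w m :
  (forall i, 0 <= w i) -> \sum_i (w i - m) = 0 -> (exists i, w i != m) ->
  exists w', [/\ forall i, 0 <= w' i, \sum_i (w' i - m) = 0,
    sum_prod_uniq w <= sum_prod_uniq w' &
    [set i | w' i != m] \proper [set i | w i != m]].
Proof.
move=> w_ge0 w_mean [i0 wi0_neq].
have [a] : exists a, w a - m < 0.
  by apply: sum_eq0_exists_lt0 w_mean _; exists i0; rewrite subr_eq0.
rewrite subr_lt0 => wa.
have [b] : exists b, m - w b < 0.
  apply: sum_eq0_exists_lt0; last by exists i0; rewrite subr_eq0 eq_sym.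
  by move: w_mean; rewrite !sumrB; lra.
rewrite subr_lt0 => wb.
have ab : a != b by apply: contraTneq wa => ->; rewrite -leNgt ltW.
pose w' i := if i == a then m else if i == b then w a + w b - m else w i.
have w'a : w' a = m by rewrite /w' eqxx.
have w'b : w' b = w a + w b - m by rewrite /w' eq_sym (negbTE ab) eqxx.
have w'E i : i != a -> i != b -> w' i = w i.
  by move=> ia ib; rewrite /w' (negbTE ia) (negbTE ib).
have w'_ge0 i : 0 <= w' i.
  rewrite /w'; case: ifP => _; first exact: le_trans (w_ge0 a) (ltW wa).
  by case: ifP => _ //; have := w_ge0 a; lra.
exists w'; split=> //.
- have : \sum_i (w' i - w i) = 0.
    rewrite (bigD1 a) //= (bigD1 b) 1?eq_sym //= big1 => [|i /andP[ia ib]].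
      by rewrite w'a w'b; lra.
    by rewrite w'E ?subrr.
  by move: w_mean; rewrite !sumrB; lra.
- by apply: sum_prod_uniq_le_smooth ab w_ge0 w'_ge0 w'E _ _; rewrite w'a w'b; nra.
apply/properP; split.
  apply/fintype.subsetP => i; rewrite !inE; case: (eqVneq i a) => [->|ia].
    by rewrite w'a eqxx.
  case: (eqVneq i b) => [->|ib]; first by rewrite (gt_eqF wb).
  by rewrite w'E.
by exists a; rewrite !inE ?w'a ?eqxx ?lt_eqF.
Qed.

Lemma maclaurin z : (0 < #|I|)%N -> (forall i, 0 <= z i) ->
  sum_prod_uniq z <= (#|I| ^_ t)%:R * ((\sum_i z i) / #|I|%:R) ^+ t.
Proof.
move=> I_gt0 z_ge0; set m := _ / _; rewrite -sum_prod_uniq_const.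
have z_mean : \sum_i (z i - m) = 0.
  by rewrite sumrB sumr_const -mulr_natr divfK ?subrr // pnatr_eq0 -lt0n.
suff smooth_all N w : (#|[set i | w i != m]| < N)%N -> (forall i, 0 <= w i) ->
    \sum_i (w i - m) = 0 -> sum_prod_uniq w <= sum_prod_uniq (fun=> m).
  exact: smooth_all _ z (ltnSn _) z_ge0 z_mean.
elim: N w => [//|N IH] w w_card w_ge0 w_mean.
case: (pickP (fun i => w i != m)) => [i wi|w_eq].
  have [w' [w'_ge0 w'_mean le_w' w'_proper]] :=
    sum_prod_uniq_smooth_step _ _ w_ge0 w_mean (ex_intro _ i wi).
  exact: le_trans le_w' (IH w' (leq_trans (proper_card w'_proper) w_card) w'_ge0 w'_mean).
have -> // : w = fun=> m.
by apply: funext => i; apply/eqP; rewrite -[_ == _]negbK w_eq.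
Qed.

End Maclaurin.

Section Enumerations.
Context {T : finType}.

Lemma card_set_tuple {t} (s : t.-tuple T) : (#|[set x in s]| == t) = uniq s.
Proof. by rewrite cardsE; apply/eqP/card_uniqP; rewrite size_tuple. Qed.

Lemma card_enum_tuples (C : {set T}) t : #|C| = t ->
  #|[pred s : t.-tuple T | [set x in s] == C]| = t`!.
Proof.
move=> C_t; rewrite -ffactnn -[in X in X ^_ _]C_t.
rewrite -(card_uniq_tuples t (mem C)); apply: eq_card => s; rewrite !inE.
apply/eqP/andP => [sC|[/allP s_C s_uniq]].
  split; last by rewrite -card_set_tuple sC C_t.
  by apply/allP => x xs; rewrite -sC !inE.
apply/eqP; rewrite eqEcard; apply/andP; split.
  by apply/fintype.subsetP => x; rewrite inE => /s_C.
have /eqP -> : #|[set x in s]| == t by rewrite card_set_tuple.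
by rewrite C_t.
Qed.

Lemma card_cons_uniq_tuples k (i : T) :
  #|[pred g : k.-tuple T | uniq (i :: g)]| = #|T|.-1 ^_ k.
Proof.
rewrite -(cardC1 i) -card_uniq_tuples; apply: eq_card => g; rewrite !inE /=.
by congr (_ && _); rewrite -has_pred1 -all_predC.
Qed.

End Enumerations.

Definition ordered_cliques {n : nat} (e : rel 'I_n) t :=
  [pred s : t.-tuple 'I_n | [set x in s] \in cliques e t].

Section Cliques.
Context {n : nat}.
Variables (e : rel 'I_n) (t : nat).

Lemma ordered_clique_uniq {s : t.-tuple 'I_n} : ordered_cliques e t s -> uniq s.
Proof. by rewrite /= inE card_set_tuple => /andP[]. Qed.

Lemma card_ordered_cliques : #|ordered_cliques e t| = (t`! * clique_number e t)%N.
Proof.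
rewrite -sum1_card (partition_big (fun s : t.-tuple 'I_n => [set x in s])
  (mem (cliques e t))) //= /clique_number mulnC -sum_nat_const.
apply: eq_bigr => C C_clique; rewrite sum1dep_card.
have := C_clique; rewrite inE => /andP[_ /eqP C_t].
rewrite -(card_enum_tuples _ _ C_t); apply: eq_card => s; rewrite !inE.
by apply: andb_idl => /eqP ->; move: C_clique; rewrite inE.
Qed.

Lemma cliques_complete : (forall x y, x != y -> e x y) ->
  cliques e t = [set A : {set 'I_n} | #|A| == t].
Proof.
move=> e_complete; apply/setP => A; rewrite !inE.
suff -> : is_clique e A by [].
by apply/forall_inP => x _; apply/forall_inP => y _; apply/implyP/e_complete.
Qed.

Lemma clique_number_complete : (forall x y, x != y -> e x y) ->
  clique_number e t = 'C(n, t).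
Proof.
by move=> e_complete; rewrite /clique_number cliques_complete // card_draws card_ord.
Qed.

End Cliques.

Section ComplexModulus.
Context {R : rcfType}.
Implicit Types z w : R[i].

Lemma cmodE z : cmod z = Normc.normc z. Proof. by case: z. Qed.
Lemma cmod_ge0 z : 0 <= cmod z. Proof. by case: z => a b; apply: sqrtr_ge0. Qed.
Lemma cmod0 : cmod (0 : R[i]) = 0. Proof. by rewrite cmodE Normc.normc0. Qed.
Lemma cmod1 : cmod (1 : R[i]) = 1. Proof. by rewrite cmodE Normc.normc1. Qed.
Lemma cmodM z w : cmod (z * w) = cmod z * cmod w.
Proof. by rewrite !cmodE Normc.normcM. Qed.
Lemma cmodD z w : cmod (z + w) <= cmod z + cmod w.
Proof. by rewrite !cmodE le_normcD. Qed.

Lemma cmod_gt0 z : (0 < cmod z) = (z != 0).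
Proof.
rewrite lt_def cmod_ge0 andbT; congr negb.
by apply/eqP/eqP => [|->]; [rewrite cmodE => /Normc.eq0_normc | rewrite cmod0].
Qed.

Lemma cmod_real (r : R) : 0 <= r -> cmod (r%:C)%C = r.
Proof. by move=> r_ge0; rewrite /cmod /= expr0n addr0 sqrtr_sqr ger0_norm. Qed.

Lemma cmodX z k : cmod (z ^+ k) = cmod z ^+ k.
Proof. by elim: k => [|k IH]; rewrite ?cmod1 // !exprS cmodM IH. Qed.

Lemma cmod_sum (I : finType) (P : pred I) (F : I -> R[i]) :
  cmod (\sum_(i | P i) F i) <= \sum_(i | P i) cmod (F i).
Proof.
elim/big_ind2 : _ => [|z1 z2 r1 r2 le1 le2|//]; first by rewrite cmod0.
by apply: le_trans (cmodD _ _) _; apply: lerD.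
Qed.

Lemma cmod_prod (I : Type) (s : seq I) (F : I -> R[i]) :
  cmod (\prod_(j <- s) F j) = \prod_(j <- s) cmod (F j).
Proof. by elim/big_rec2 : _ => [|j r z _ <-]; rewrite ?cmod1 ?cmodM. Qed.

End ComplexModulus.

Lemma big_tuple_cons (V : nmodType) (T : finType) k (G : seq T -> V) :
  \sum_(i : T) \sum_(g : k.-tuple T) G (i :: g) = \sum_(s : k.+1.-tuple T) G s.
Proof.
rewrite pair_big /= (reindex (fun s : k.+1.-tuple T => (thead s, behead_tuple s))).
  by apply: eq_bigr => s _; case/tupleP: s.
exists (fun p : T * k.-tuple T => cons_tuple p.1 p.2) => [s _ | [i g] _] /=.
  by case/tupleP: s => x s'; apply: val_inj.
by rewrite theadE; congr pair; apply: val_inj.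
Qed.

Section CliqueTensor.
Context {R : rcfType} {n k : nat}.
Variable e : rel 'I_n.
Local Notation t := k.+1.
Local Notation A := (clique_tensor R e t).

Lemma cmod_clique_tensor (s : t.-tuple 'I_n) :
  cmod (A s) = (k`!%:R)^-1 *+ ordered_cliques e t s.
Proof.
rewrite /clique_tensor size_tuple eqxx /=; case: ifP => _; last by rewrite cmod0.
by rewrite -(rmorph_nat (real_complex R)) -fmorphV cmod_real // invr_ge0 ler0n.
Qed.

Lemma eigen_cmod_le (x : 'I_n -> R[i]) lam :
  (forall i, tensor_apply t A x i = lam * x i ^+ k) ->
  cmod lam * \sum_i cmod (x i) ^+ t
    <= (k`!%:R)^-1 * \sum_(s | ordered_cliques e t s) \prod_(j <- s) cmod (x j).
Proof.
move=> eig; set y := fun j => cmod (x j).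
have row_le i : cmod lam * y i ^+ k
    <= \sum_(g : k.-tuple 'I_n) cmod (A (i :: g)) * \prod_(j <- g) y j.
  rewrite -cmodX -cmodM -eig; apply: le_trans (cmod_sum _ _ _) _.
  by apply: ler_sum => g _; rewrite cmodM cmod_prod.
rewrite mulr_sumr (eq_bigr (fun i => y i * (cmod lam * y i ^+ k))) => [|i _];
  last by rewrite exprS mulrCA.
apply: (@le_trans _ _ (\sum_i y i *
    \sum_(g : k.-tuple 'I_n) cmod (A (i :: g)) * \prod_(j <- g) y j)).
  by apply: ler_sum => i _; apply: ler_wpM2l; [apply: cmod_ge0 | apply: row_le].
rewrite (eq_bigr (fun i => \sum_(g : k.-tuple 'I_n)
  cmod (A (i :: g)) * \prod_(j <- i :: g) y j)) => [|i _]; last first.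
  by rewrite mulr_sumr; apply: eq_bigr => g _; rewrite big_cons mulrCA.
rewrite (big_tuple_cons _ _ _ (fun s => cmod (A s) * \prod_(j <- s) y j)).
rewrite mulr_sumr [X in _ <= X]big_mkcond /=; apply: ler_sum => s _.
by rewrite cmod_clique_tensor /=; case: ifP; rewrite ?mulr1n ?mulr0n ?mul0r.
Qed.

Lemma ordered_clique_sum_exprn_le (y : 'I_n -> R) : (0 < n)%N ->
  (forall j, 0 <= y j) ->
  (\sum_(s | ordered_cliques e t s) \prod_(j <- s) y j) ^+ t
    <= (t`! * clique_number e t)%:R ^+ k * (n ^_ t)%:R
       * ((\sum_j y j ^+ t) / n%:R) ^+ t.
Proof.
move=> n_gt0 y_ge0; rewrite -card_ordered_cliques -mulrA.
apply: le_trans (power_mean_exprS _ _ _ k) _ => [s _|]; first exact: prodr_ge0.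
apply: ler_wpM2l; first exact: exprn_ge0.
have := maclaurin t (fun j => y j ^+ t); rewrite card_ord => /(_ n_gt0).
move=> /(_ (fun j => exprn_ge0 _ (y_ge0 j))); apply: le_trans.
rewrite /sum_prod_uniq big_mkcond [X in _ <= X]big_mkcond; apply: ler_sum => s _ /=.
case: ifP => [/ordered_clique_uniq ->|_]; first by rewrite prodrXl.
by case: ifP => // _; apply: prodr_ge0 => j _; apply: exprn_ge0.
Qed.

Lemma clique_eigenvalue_exprn_le lam : is_eigenvalue t A lam ->
  cmod lam ^+ t <= (t%:R / n%:R) ^+ t * 'C(n, t)%:R * (clique_number e t)%:R ^+ k.
Proof.
case=> x [[i0 xi0] eig]; set y := fun j => cmod (x j).
have y_ge0 j : 0 <= y j by apply: cmod_ge0.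
have n_gt0 : (0 < n)%N := leq_ltn_trans (leq0n i0) (ltn_ord i0).
set N := \sum_j y j ^+ t.
have N_gt0 : 0 < N.
  rewrite /N (bigD1 i0) //= ltr_wpDr ?exprn_gt0 ?cmod_gt0 //.
  by apply: sumr_ge0 => j _; apply: exprn_ge0.
pose W := \sum_(s | ordered_cliques e t s) \prod_(j <- s) y j.
have W_ge0 : 0 <= W by apply: sumr_ge0 => s _; apply: prodr_ge0.
have powered : (cmod lam * N) ^+ t <= ((k`!%:R)^-1 * W) ^+ t.
  apply: lerXn2r; last exact: eigen_cmod_le eig.
    by rewrite nnegrE mulr_ge0 ?cmod_ge0 ?ltW.
  by rewrite nnegrE mulr_ge0 ?invr_ge0 ?ler0n.
rewrite -(ler_pM2r (exprn_gt0 t N_gt0)) -exprMn (le_trans powered) //.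
rewrite exprMn; apply: le_trans.
  apply: ler_wpM2l; last exact: ordered_clique_sum_exprn_le.
  by rewrite exprn_ge0 // invr_ge0 ler0n.
rewrite -bin_ffact factS !natrM.
have n_neq0 : n%:R != 0 :> R by rewrite pnatr_eq0 -lt0n.
rewrite le_eqVlt; apply/orP; left; apply/eqP.
rewrite !exprMn !exprVn !exprS; field.
by rewrite n_neq0 !expf_neq0 // pnatr_eq0 -lt0n fact_gt0.
Qed.

Lemma complete_clique_eigenvalue : (forall x y, x != y -> e x y) -> (0 < n)%N ->
  is_eigenvalue t A 'C(n.-1, k)%:R.
Proof.
move=> e_complete n_gt0; exists (fun=> 1); split; first by exists (Ordinal n_gt0).
move=> i; rewrite /tensor_apply expr1n mulr1.
rewrite (eq_bigr (fun g : k.-tuple 'I_n =>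
  if uniq (i :: g) then (k`!%:R)^-1 else 0)); last first.
  move=> g _; rewrite big1_eq mulr1 /clique_tensor /= size_tuple eqxx /=.
  by rewrite cliques_complete // inE (card_set_tuple (cons_tuple i g)).
rewrite -big_mkcond sumr_const card_cons_uniq_tuples card_ord -bin_ffact.
by rewrite -(mulr_natr (k`!%:R)^-1) natrM mulrCA mulVf ?mulr1.
Qed.

Lemma clique_free_eigenvalue0 : clique_number e t = 0%N -> (0 < n)%N ->
  is_eigenvalue t A 0.
Proof.
move=> no_clique n_gt0; exists (fun=> 1); split; first by exists (Ordinal n_gt0).
move=> i; rewrite mul0r /tensor_apply big1 // => g _.
by rewrite /clique_tensor (cards0_eq no_clique) inE andbF mul0r.
Qed.

Lemma extremal_clique_eigenvalue : (0 < k)%N -> (0 < n)%N ->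
  (forall x y, x != y -> e x y) \/ clique_number e t = 0%N ->
  exists2 lam, is_eigenvalue t A lam & cmod lam ^+ t
    = (t%:R / n%:R) ^+ t * 'C(n, t)%:R * (clique_number e t)%:R ^+ k.
Proof.
move=> k_gt0 n_gt0 [e_complete|no_clique].
  exists 'C(n.-1, k)%:R; first exact: complete_clique_eigenvalue.
  rewrite -(rmorph_nat (real_complex R)) cmod_real // clique_number_complete //.
  rewrite -mulrA -exprS -exprMn mulrAC -natrM -mul_bin_diag natrM mulrC mulKf //.
  by rewrite pnatr_eq0 -lt0n.
exists 0; first exact: clique_free_eigenvalue0.
by rewrite no_clique cmod0 !expr0n /= (negbTE (lt0n_neq0 k_gt0)) mulr0.
Qed.

End CliqueTensor.

Section SpectralRadius.
Context {R : realType} {m n : nat} {A : tensor R n}.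

Lemma spectral_radius_eq0 : ~ (exists lam, is_eigenvalue m A lam) ->
  spectral_radius m A = 0.
Proof.
move=> no_eig; rewrite /spectral_radius.
suff -> : [set cmod lam | lam in [set lam | is_eigenvalue m A lam]]%classic = set0.
  exact: sup0.
by apply/seteqP; split => // r [lam eig _]; case: no_eig; exists lam.
Qed.

Context {b : R}.
Hypothesis eig_le : forall lam, is_eigenvalue m A lam -> cmod lam <= b.

Lemma cmod_le_spectral_radius lam : is_eigenvalue m A lam ->
  cmod lam <= spectral_radius m A.
Proof.
move=> eig; apply: sup_upper_bound; last by exists lam.
by split; [exists (cmod lam), lam | exists b => _ [mu eig_mu <-]; apply: eig_le].
Qed.

Lemma spectral_radius_le : 0 <= b -> spectral_radius m A <= b.
Proof.
have [[lam eig] _|no_eig] := pselect (exists lam, is_eigenvalue m A lam).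
  apply: ge_sup => [|_ [mu eig_mu <-]]; last exact: eig_le.
  by exists (cmod lam), lam.
by rewrite spectral_radius_eq0.
Qed.

End SpectralRadius.

Lemma exprS_mul_powR (R : realType) (a b c : R) k : 0 <= b -> 0 <= c ->
  (a * b `^ (k.+1%:R)^-1 * c `^ ((k.+1%:R - 1) / k.+1%:R)) ^+ k.+1
    = a ^+ k.+1 * b * c ^+ k.
Proof.
move=> b_ge0 c_ge0; have k1_neq0 : k.+1%:R != 0 :> R by rewrite pnatr_eq0.
have powRX (x r : R) : 0 <= x -> (x `^ r) ^+ k.+1 = x `^ (r * k.+1%:R).
  by move=> x_ge0; rewrite -powR_mulrn ?powR_ge0 // powRrM.
rewrite !exprMn !powRX // mulVf // divfK // powRr1 //.
by rewrite -natr1 addrK powR_mulrn.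
Qed.

Theorem lemma6 (R : realType) (t n : nat) (e : rel 'I_n)
  (e_sym : symmetric e) (e_irr : irreflexive e) (ht : (2 <= t)%N) :
  let bound : R :=
    t%:R / n%:R * ('C(n, t)%:R `^ (t%:R)^-1)
      * ((clique_number e t)%:R `^ ((t%:R - 1) / t%:R)) in
  clique_spectral_radius R e t <= bound /\
  ((forall x y : 'I_n, x != y -> e x y) \/ clique_number e t = 0%N ->
     clique_spectral_radius R e t = bound).
Proof.
case: t ht => [|k] // k_gt0 bound.
have bound_ge0 : 0 <= bound by rewrite !mulr_ge0 ?divr_ge0 ?powR_ge0.
have boundX : bound ^+ k.+1
    = (k.+1%:R / n%:R) ^+ k.+1 * 'C(n, k.+1)%:R * (clique_number e k.+1)%:R ^+ k.
  by rewrite exprS_mul_powR.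
have eig_le lam : is_eigenvalue k.+1 (clique_tensor R e k.+1) lam -> cmod lam <= bound.
  by move/clique_eigenvalue_exprn_le; rewrite -boundX ler_pXn2r // nnegrE cmod_ge0.
split=> [|extremal]; first exact: spectral_radius_le.
apply/le_anti; rewrite spectral_radius_le //=.
have [n0|n_gt0] := posnP n.
  rewrite /clique_spectral_radius spectral_radius_eq0 => [|[lam [x [[[i i_lt] _] _]]]].
    by rewrite /bound (_ : n%:R = 0) ?invr0 ?mulr0 ?mul0r // n0.
  by rewrite n0 in i_lt.
have [lam eig_lam] := extremal_clique_eigenvalue (R := R) e k_gt0 n_gt0 extremal.
move/eqP; rewrite -boundX eqrXn2 ?cmod_ge0 // => /eqP <-.
exact: cmod_le_spectral_radius eig_le _ eig_lam.
Qed.
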